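(* Let $n\ge1$ and let $\sigma:V_n\setminus\{(0,0,n+1)\}\to V_n\setminus\{(0,0,n+1)\}$ be the involution $\sigma(i,j,k)=(i,1+i-j,n+1+i-k)$. Then $$\mathcal T_n=\{(\sigma(u),\sigma(v),\sigma(\alpha),\sigma(\beta)) : (\alpha,\beta,u,v)\in\mathcal T_n\},$$ where tiles are written as (right, top, left, bottom); that is, $\mathcal T_n$ is equal to the set of its tiles rotated by a half turn with $\sigma$ applied to all edge labels.
   Context: $V_n=\{(v_0,v_1,v_2)\in\mathbb{Z}^3: 0\le v_0\le v_1\le 1,\ v_1\le v_2\le n+1\}$, elements written as words $v_0v_1v_2$. A Wang tile is $t=(a,b,c,d)$ with $\mathrm{RIGHT}(t)=a$, $\mathrm{TOP}(t)=b$, $\mathrm{LEFT}(t)=c$, $\mathrm{BOTTOM}(t)=d$; $\hat t=(b,a,d,c)$, $\hat S=\{\hat t:t\in S\}$. Define (as (right, top, left, bottom)): $W_n=\{(11(i+1),11(j+1),11i,11j):1\le i,j\le n\}$; $B_n=\{(00(i+1),111,00i,11n):0\le i\le n-1\}$; $G_n=\{(01(i+1),111,00i,11(n+1)):0\le i\le n\}$; $Y_n=\{(01(i+1),112,01i,11(n+1)):1\le i\le n\}$; $j_n^{k,l,r,s}=((0,k,l),(0,r,s),(0,s,r+n),(0,l,k+n))$ for $(k,l),(r,s)\in\{(0,0),(0,1),(1,1)\}$; $J_n$ = these 9 tiles minus $j_n^{0,0,1,1},j_n^{1,1,0,0}$. $\mathcal{T}_n=W_n\cup B_n\cup G_n\cup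 Y_n\cup\hat B_n\cup\hat G_n\cup\hat Y_n\cup J_n$. *)

From Stdlib Require Import ZArith Lia.
Open Scope Z_scope.

Definition label : Type := (Z * Z * Z)%type.

Definition in_V (n : Z) (v : label) : Prop :=
  let '(v0, v1, v2) := v in 0 <= v0 <= v1 /\ v1 <= 1 /\ v1 <= v2 <= n + 1.

(* Wang tile (RIGHT, TOP, LEFT, BOTTOM). *)
Definition tile : Type := (label * label * label * label)%type.

Definition mk (a b c d : label) : tile := (a, b, c, d).

Definition hat (t : tile) : tile :=
  let '(a, b, c, d) := t in (b, a, d, c).

Definition hatS (S : tile -> Prop) (t : tile) : Prop :=
  exists s, S s /\ t = hat s.

Definition W (n : Z) (t : tile) : Prop :=
  exists i j, 1 <= i <= n /\ 1 <= j <= n /\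
    t = mk (1, 1, i + 1) (1, 1, j + 1) (1, 1, i) (1, 1, j).

Definition B (n : Z) (t : tile) : Prop :=
  exists i, 0 <= i <= n - 1 /\
    t = mk (0, 0, i + 1) (1, 1, 1) (0, 0, i) (1, 1, n).

Definition G (n : Z) (t : tile) : Prop :=
  exists i, 0 <= i <= n /\
    t = mk (0, 1, i + 1) (1, 1, 1) (0, 0, i) (1, 1, n + 1).

Definition Y (n : Z) (t : tile) : Prop :=
  exists i, 1 <= i <= n /\
    t = mk (0, 1, i + 1) (1, 1, 2) (0, 1, i) (1, 1, n + 1).

Definition okpair (k l : Z) : Prop :=
  (k = 0 /\ l = 0) \/ (k = 0 /\ l = 1) \/ (k = 1 /\ l = 1).

Definition jtile (n k l r s : Z) : tile :=
  mk (0, k, l) (0, r, s) (0, s, r + n) (0, l, k + n).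

Definition J (n : Z) (t : tile) : Prop :=
  exists k l r s, okpair k l /\ okpair r s /\
    ~ (k = 0 /\ l = 0 /\ r = 1 /\ s = 1) /\
    ~ (k = 1 /\ l = 1 /\ r = 0 /\ s = 0) /\
    t = jtile n k l r s.

Definition T (n : Z) (t : tile) : Prop :=
  W n t \/ B n t \/ G n t \/ Y n t \/
  hatS (B n) t \/ hatS (G n) t \/ hatS (Y n) t \/ J n t.

(* sigma(i,j,k) = (i, 1+i-j, n+1+i-k); defined on all of Z^3, the paper
   considers its restriction to V_n \ {(0,0,n+1)}. *)
Definition sigma (n : Z) (v : label) : label :=
  let '(i, j, k) := v in (i, 1 + i - j, n + 1 + i - k).

(* The half turn [half_turn n] of a tile swaps opposite edges and applies the
   involution sigma to every label, so it is itself an involution, and it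
   commutes with [hat].  Reindexing shows that it maps W_n, G_n and J_n into
   themselves (i |-> n+1-i on W_n, i |-> n-i on G_n, and
   (k,l,r,s) |-> (1-s,1-r,1-l,1-k) on J_n) and exchanges B_n and Y_n
   (i |-> n-i); by commutation with [hat] it also exchanges hat B_n and
   hat Y_n and preserves hat G_n.  An involution mapping a set into itself
   maps it onto itself. *)
From Stdlib Require Import ZArith Lia.
Open Scope Z_scope.

Definition half_turn (n : Z) (t : tile) : tile :=
  let '(a, b, u, v) := t in (sigma n u, sigma n v, sigma n a, sigma n b).

Ltac tuple_eq :=
  cbv [half_turn sigma mk jtile];
  repeat match goal with |- (_, _) = (_, _) => f_equal end; lia.

Lemma sigma_involutive (n : Z) (v : label) : sigma n (sigma n v) = v.
Proof. destruct v as [[i j] k]; tuple_eq. Qed.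

Lemma half_turn_involutive (n : Z) (t : tile) : half_turn n (half_turn n t) = t.
Proof.
  destruct t as [[[a b] u] v]; cbn.
  now rewrite !sigma_involutive.
Qed.

Lemma half_turn_hat (n : Z) (t : tile) : half_turn n (hat t) = hat (half_turn n t).
Proof. now destruct t as [[[a b] u] v]. Qed.

Lemma half_turn_hatS (n : Z) (S S' : tile -> Prop) :
  (forall t, S t -> S' (half_turn n t)) ->
  forall t, hatS S t -> hatS S' (half_turn n t).
Proof.
  intros HSS' t [s [Hs ->]].
  exists (half_turn n s); split; [now apply HSS' | apply half_turn_hat].
Qed.

Lemma half_turn_W (n : Z) (t : tile) : W n t -> W n (half_turn n t).
Proof.
  intros [i [j [Hi [Hj ->]]]].
  exists (n + 1 - i), (n + 1 - j); repeat split; try lia; tuple_eq.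
Qed.

Lemma half_turn_B (n : Z) (t : tile) : B n t -> Y n (half_turn n t).
Proof.
  intros [i [Hi ->]].
  exists (n - i); split; [lia | tuple_eq].
Qed.

Lemma half_turn_G (n : Z) (t : tile) : G n t -> G n (half_turn n t).
Proof.
  intros [i [Hi ->]].
  exists (n - i); split; [lia | tuple_eq].
Qed.

Lemma half_turn_Y (n : Z) (t : tile) : Y n t -> B n (half_turn n t).
Proof.
  intros [i [Hi ->]].
  exists (n - i); split; [lia | tuple_eq].
Qed.

Lemma half_turn_jtile (n k l r s : Z) :
  half_turn n (jtile n k l r s) = jtile n (1 - s) (1 - r) (1 - l) (1 - k).
Proof. tuple_eq. Qed.

Lemma okpair_swap (k l : Z) : okpair k l -> okpair (1 - l) (1 - k).
Proof. unfold okpair; lia. Qed.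

Lemma half_turn_J (n : Z) (t : tile) : J n t -> J n (half_turn n t).
Proof.
  intros [k [l [r [s [Hkl [Hrs [N1 [N2 ->]]]]]]]].
  exists (1 - s), (1 - r), (1 - l), (1 - k).
  repeat split; try (now apply okpair_swap).
  - intros H; apply N1; lia.
  - intros H; apply N2; lia.
  - apply half_turn_jtile.
Qed.

Lemma half_turn_T (n : Z) (t : tile) : T n t -> T n (half_turn n t).
Proof.
  unfold T.
  intros [H|[H|[H|[H|[H|[H|[H|H]]]]]]].
  - left; now apply half_turn_W.
  - do 3 right; left; now apply half_turn_B.
  - do 2 right; left; now apply half_turn_G.
  - right; left; now apply half_turn_Y.
  - do 6 right; left; exact (half_turn_hatS n _ _ (half_turn_B n) t H).
  - do 5 right; left; exact (half_turn_hatS n _ _ (half_turn_G n) t H).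
  - do 4 right; left; exact (half_turn_hatS n _ _ (half_turn_Y n) t H).
  - do 7 right; now apply half_turn_J.
Qed.

Lemma involutive_stable_image {X : Type} (f : X -> X) (P : X -> Prop) :
  (forall x, f (f x) = x) -> (forall x, P x -> P (f x)) ->
  forall x, P x <-> exists y, P y /\ x = f y.
Proof.
  intros f_invol HP x; split.
  - intros Hx; exists (f x); split; [now apply HP | now rewrite f_invol].
  - intros [y [Hy ->]]; now apply HP.
Qed.

Theorem lemma4p1 (n : Z) (hn : 1 <= n) :
  forall t : tile,
    T n t <->
    exists a b u v : label,
      T n (a, b, u, v) /\
      t = (sigma n u, sigma n v, sigma n a, sigma n b).
Proof.
  intros t.
  rewrite (involutive_stable_image (half_turn n) (T n)
             (half_turn_involutive n) (half_turn_T n) t).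
  split.
  - intros [[[[a b] u] v] Hs]; now exists a, b, u, v.
  - intros [a [b [u [v Hs]]]]; now exists (a, b, u, v).
Qed.
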